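(* Let $d\ge 2$ be an integer. Let $(\mathrm{CD}_d,H_d)$ be a $2$-weak combinatorial description of the elementary differentials in dimension $d$ which is compatible with $\mathrm{RT}$ via equivariant surjections $p_n:\mathrm{RT}(n)\to\mathrm{CD}_d(n)$. Then every $p_n$ is a bijection; that is, $\mathrm{RT}$ is the only $2$-weak combinatorial description of $\mathcal{W}_d$ compatible with $\mathrm{RT}$.
   Context: Rooted trees: a rooted tree on $[n]$ is a set $E$ of ordered pairs (an edge $(v,w)$ means $w$ is a child of $v$) such that exactly one vertex (the root) has no parent, every other vertex has exactly one parent, and all vertices are connected to the root by following parents; $\mathrm{RT}(n)$ is the set of these, with $\mathfrak{S}_n$ acting by relabelling. $\mathcal{C}_d=C^\infty(\mathbb{R}^d,\mathbb{R}^d)$. For $\tau$ with root $r$ whose children are $v_1,\dots,v_k$, recursively $F(\tau)((f^i)_{i})=\sum_{j_1,\dots,j_k=1}^d F(\tau_{v_1})(\cdots)_{j_1}\cdots F(\tau_{v_k})(\cdots)_{j_k}\,\partial_{j_1}\cdots\partial_{j_k}f^r$, with $\tau_{v_m}$ the subtree of $v_m$ and its descendants evaluated on the $f^i$ indexed by its vertices, $(\cdot)_j$ the $j$-th coordinate, $\partial_j=\partial/\partial x_j$ (single vertex: $F(\tau)=f^r$). Labellings: fix $\ell$ (here $\ell=2$). $\mathfrak{S}_n$ acts on $[\ell]^n$ by permuting coordinates; for $k=(k_1,\dots,k_\ell)\in\mathbb{N}^\ell$ with $\sum k_i=n$, $[\ell]^{k}$ is the set of words with exactly $k_i$ letters $i$.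 For a sequence $C=(C(n))_n$ of $\mathfrak{S}_n$-sets, $\mathrm{L}^{k}(C)=(C(n)\times[\ell]^{k})/\big((a,\sigma.x)\sim(\sigma.a,x)\big)$. For $\varphi:[\ell]\to[\ell]$, $k^\varphi_i=\sum_{j\in\varphi^{-1}(i)}k_j$ and $\varphi_*:\mathrm{L}^{k}(C)\to\mathrm{L}^{k^\varphi}(C)$, $(c,(x_1,\dots,x_n))\mapsto(c,(\varphi(x_1),\dots,\varphi(x_n)))$; on maps $\Phi:\mathcal{C}_d^\ell\to\mathcal{C}_d$, $(\varphi_*\Phi)(f^1,\dots,f^\ell)=\Phi(f^{\varphi(1)},\dots,f^{\varphi(\ell)})$. $F^{k}((\tau,x))(f^1,\dots,f^\ell)=F(\tau)(f^{x_1},\dots,f^{x_n})$, and $\mathcal{W}_d^{k}$ is the real span of $F^{k}(\mathrm{L}^{k}(\mathrm{RT}))$ (maps $\mathcal{C}_d^\ell\to\mathcal{C}_d$ homogeneous of degree $k_i$ in the $i$-th input). An $\ell$-weak combinatorial description is a sequence $\mathrm{CD}_d=(\mathrm{CD}_d(n))_n$ of $\mathfrak{S}_n$-sets together with maps $H_d^{k}:\mathrm{L}^{k}(\mathrm{CD}_d)\to\mathcal{W}_d^{k}$ for all $k\in\mathbb{N}^\ell$, whose images span $\mathcal{W}_d^{k}$, and with $H_d^{k^\varphi}\circ\varphi_*=\varphi_*\circ H_d^{k}$ for every $\varphi:[\ell]\to[\ell]$. It is compatible with $\mathrm{RT}$ if there are $\mathfrak{S}_n$-equivariant surjections $p_n:\mathrm{RT}(n)\to\mathrm{CD}_d(n)$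 with $F^{k}((\tau,x))=H^{k}_d((p_n(\tau),x))$ for all $\tau\in\mathrm{RT}(n)$, $x\in[\ell]^{k}$. *)

From HB Require Import structures.
From mathcomp Require Import all_boot all_order all_algebra all_fingroup.
From mathcomp Require Import all_classical all_reals all_analysis.
From Stdlib Require Lists.List.
Set Implicit Arguments.
Unset Strict Implicit.
Unset Printing Implicit Defensive.
Import Order.TTheory GRing.Theory Num.Theory.
Import numFieldNormedType.Exports.
Local Open Scope ring_scope.

Section Defs.
Variables (R : realType) (d : nat).

Definition vfield := 'rV[R]_d -> 'rV[R]_d.

Definition partial (j : 'I_d) (g : vfield) : vfield :=
  fun x => derive g x (delta_mx 0 j).

Definition iter_partial (js : seq 'I_d) (g : vfield) : vfield :=
  foldr (fun j h => partial j h) g js.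

Definition smooth (g : vfield) : Prop :=
  forall js : seq 'I_d,
    continuous (iter_partial js g) /\
    forall (j : 'I_d) (x : 'rV[R]_d), derivable (iter_partial js g) x (delta_mx 0 j).

Definition Cd := {g : vfield | smooth g}.

Definition Map := ('I_2 -> Cd) -> vfield.

End Defs.

Section Trees.
Variable n : nat.

Definition parents (E : {set 'I_n * 'I_n}) (v : 'I_n) : {set 'I_n} :=
  [set u | (u, v) \in E].

(* an edge (v,w) means w is a child of v; exactly one vertex r has no parent,
   every other vertex has exactly one parent, every vertex is reached from r
   following edges parent -> child *)
Definition is_rtree (E : {set 'I_n * 'I_n}) : bool :=
  [exists r : 'I_n, [forall v : 'I_n,
     [&& (#|parents E v| == 0%N) == (v == r),
         (v != r) ==> (#|parents E v| == 1%N) &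
         connect (fun a b => (a, b) \in E) r v]]].

Definition RT := {E : {set 'I_n * 'I_n} | is_rtree E}.

Definition relabel (s : {perm 'I_n}) (E : {set 'I_n * 'I_n}) : {set 'I_n * 'I_n} :=
  [set (s p.1, s p.2) | p in E].

Definition children (E : {set 'I_n * 'I_n}) (v : 'I_n) : seq 'I_n :=
  [seq w <- enum 'I_n | (v, w) \in E].

End Trees.

Section Elem.
Variables (R : realType) (d n : nat).
Local Open Scope ring_scope.

(* F(tau_v)((f^i)_i), computed with fuel (the depth of a tree on [n] is < n) *)
Fixpoint elemF (E : {set 'I_n * 'I_n}) (f : 'I_n -> vfield R d)
    (fuel : nat) (v : 'I_n) : vfield R d :=
  match fuel with
  | 0 => fun _ => 0
  | fuel'.+1 => fun x =>
      let cs := children E v in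
      \sum_(J : {ffun 'I_(size cs) -> 'I_d})
        (\prod_(m < size cs) (elemF E f fuel' (nth v cs m) x) ord0 (J m)) *:
        iter_partial [seq J m | m <- enum 'I_(size cs)] (f v) x
  end.

Definition root (E : {set 'I_n * 'I_n}) : option 'I_n :=
  [pick r | #|parents E r| == 0%N].

Definition F (t : RT n) (f : 'I_n -> vfield R d) : vfield R d :=
  match root (val t) with
  | Some r => elemF (val t) f n r
  | None => fun _ => 0
  end.

Definition Fk (t : RT n) (x : 'I_n -> 'I_2) : Map R d :=
  fun g => F t (fun i => sval (g (x i))).

End Elem.

Definition wcount (n : nat) (x : 'I_n -> 'I_2) (i : 'I_2) : nat :=
  #|[set j | x j == i]|.

Definition lincomb (R : realType) (d : nat) (T : Type)
    (G : T -> Map R d) (s : seq (T * R)) : Map R d :=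
  fun g y => \sum_(t <- s) t.2 *: G t.1 g y.

(* W_d^k = real span of F^k(L^k(RT)) *)
Definition W (R : realType) (d : nat) (k : 'I_2 -> nat) (Phi : Map R d) : Prop :=
  exists (n : nat) (s : seq ((RT n * ('I_n -> 'I_2)) * R)),
    (forall t, Stdlib.Lists.List.In t s -> forall i, wcount t.1.2 i = k i) /\
    Phi = lincomb (fun tx => @Fk R d n tx.1 tx.2) s.

Definition pushMap (R : realType) (d : nat) (phi : 'I_2 -> 'I_2) (Phi : Map R d)
  : Map R d := fun g => Phi (fun i => g (phi i)).

(* a sequence of S_n-sets (left actions, s.(t.a) = (s o t).a; note that in
   MathComp (t * s) is the permutation "t then s" = s o t) *)
Definition is_Sn_set (C : nat -> Type) (act : forall n, {perm 'I_n} -> C n -> C n)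
  : Prop :=
  (forall n (a : C n), act n 1%g a = a) /\
  (forall n (s t : {perm 'I_n}) (a : C n), act n s (act n t a) = act n (t * s)%g a).

(* H is given on
   representatives (a, x) of L^k(CD) = (CD(n) x [2]^k)/~ ; it must be
   well defined on the quotient: H(a, s.x) = H(s.a, x) with (s.x)_i = x_{s(i)}. *)
Definition weak_comb_descr (R : realType) (d : nat) (CD : nat -> Type)
    (act : forall n, {perm 'I_n} -> CD n -> CD n)
    (H : forall n, CD n -> ('I_n -> 'I_2) -> Map R d) : Prop :=
  [/\ is_Sn_set act,
      (forall n (s : {perm 'I_n}) (a : CD n) (x : 'I_n -> 'I_2),
          H n a (fun i => x (s i)) = H n (act n s a) x),
      (forall n (a : CD n) (x : 'I_n -> 'I_2), @W R d (wcount x) (H n a x)),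
      (forall (k : 'I_2 -> nat) (Phi : Map R d), @W R d k Phi ->
         exists (n : nat) (s : seq ((CD n * ('I_n -> 'I_2)) * R)),
           (forall t, Stdlib.Lists.List.In t s -> forall i, wcount t.1.2 i = k i) /\
           Phi = lincomb (fun ax => H n ax.1 ax.2) s) &
      (forall (phi : 'I_2 -> 'I_2) n (a : CD n) (x : 'I_n -> 'I_2),
          H n a (fun i => phi (x i)) = pushMap phi (H n a x))].

Definition compatible_RT (R : realType) (d : nat) (CD : nat -> Type)
    (act : forall n, {perm 'I_n} -> CD n -> CD n)
    (H : forall n, CD n -> ('I_n -> 'I_2) -> Map R d)
    (p : forall n, RT n -> CD n) : Prop :=
  [/\
      (forall n (s : {perm 'I_n}) (t t' : RT n),
          val t' = relabel s (val t) -> p n t' = act n s (p n t)),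
      (forall n (c : CD n), exists t : RT n, p n t = c) &
      (forall n (t : RT n) (x : 'I_n -> 'I_2), @Fk R d n t x = H n (p n t) x)].

From Pilot Require Import Defs.
From HB Require Import structures.
From mathcomp Require Import all_boot all_order all_algebra all_fingroup.
From mathcomp Require Import all_classical all_reals all_analysis.
Set Implicit Arguments.
Unset Strict Implicit.
Unset Printing Implicit Defensive.
Import Order.TTheory GRing.Theory Num.Theory.
Import numFieldNormedType.Exports.

(* Evaluate elementary differentials at the origin on the exponential fields
   f^0(y) = exp(sum_j y_j) e_0 and f^1(y) = exp(sum_{j <> 1} y_j) e_1, which
   needs d >= 2.  Every partial derivative of f^c is a multiple of f^c, and
   F(tau)(f^{x_1}, ..., f^{x_n})(0) is e_{x_root} if no edge of tau joins two
   vertices labelled 1, and 0 otherwise.  Labelling a single vertex by 1 thus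
   detects the root, and labelling two vertices by 1 detects whether they are
   adjacent; a rooted tree is determined by its root and its underlying
   undirected graph.  Hence tau |-> F^k((tau, -)) is injective, and so is p_n
   because F^k = H^k o p_n. *)

Section RootedTree.
Variables (n : nat) (E : {set 'I_n * 'I_n}) (r : 'I_n).

Definition edge : rel 'I_n := fun a b => (a, b) \in E.

Definition rooted : Prop :=
  [/\ #|parents E r| = 0, forall v, v != r -> #|parents E v| = 1 &
      forall v, connect edge r v].

Hypothesis hr : rooted.

Lemma rooted_root_parentless u : (u, r) \notin E.
Proof.
case: hr => r0 _ _; apply/negP => ur.
by move/eqP: r0; rewrite cards_eq0 => /eqP/setP/(_ u); rewrite !inE ur.
Qed.

Lemma rooted_parent_exists v : v != r -> exists u, (u, v) \in E.
Proof.
case: hr => _ r1 _ /r1/eqP/cards1P[u pv]; exists u.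
by have := set11 u; rewrite -pv inE.
Qed.

Lemma rooted_parent_uniq u u' v : (u, v) \in E -> (u', v) \in E -> u = u'.
Proof.
move=> uv u'v; have vr : v != r.
  by apply: contraTneq uv => ->; exact: rooted_root_parentless.
case: hr => _ /(_ v vr)/eqP/cards1P[z pv].
have : u \in parents E v by rewrite inE.
have : u' \in parents E v by rewrite inE.
by rewrite pv !inE => /eqP -> /eqP ->.
Qed.

(* Along the path from r to a vertex of C, the unique parent of each vertex is
   its predecessor, so C propagates back to the parentless root. *)
Lemma rooted_parent_closed_empty (C : 'I_n -> Prop) :
  (forall v, C v -> exists2 u, C u & (u, v) \in E) -> forall v, ~ C v.
Proof.
move=> Cparent v Cv; case: hr => _ _ /(_ v)/connectP[p rp vp].
suff Cr : C r by have [u _] := Cparent r Cr; apply/negP/rooted_root_parentless.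
elim: p r rp vp {Cv}(Cv) => [|w p IH] x /= => [_ -> //|/andP[xw wp] vp Cv].
have [u Cu uw] := Cparent w (IH w wp vp Cv).
by rewrite (rooted_parent_uniq xw uw).
Qed.

Lemma rooted_asym a b : (a, b) \in E -> (b, a) \notin E.
Proof.
move=> ab; apply/negP => ba.
pose C v := v = a \/ v = b.
apply: (@rooted_parent_closed_empty C _ a (or_introl erefl)).
by move=> v [->|->]; [exists b; [right|] | exists a; [left|]].
Qed.

Lemma rooted_irrefl a : (a, a) \notin E.
Proof. by apply/negP => aa; have := rooted_asym aa; rewrite aa. Qed.

(* A path with n edges repeats a vertex, and the stretch between the two
   occurrences is a parent-closed set. *)
Lemma rooted_path_size u p : path edge u p -> size p < n.
Proof.
move=> up; rewrite ltnNge; apply/negP => np.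
have /(uniqPn u)[i [j [ij js eqij]]] : ~~ uniq (u :: p).
  apply: contraL np => /card_uniqP Up.
  by rewrite -ltnNge; have := max_card (mem (u :: p)); rewrite Up card_ord.
pose C v := exists2 k, i < k <= j & nth u (u :: p) k = v.
apply: (@rooted_parent_closed_empty C _ (nth u (u :: p) j)).
  move=> v [k /andP[ik kj] <-{v}].
  have k0 : 0 < k by apply: leq_ltn_trans ik.
  exists (nth u (u :: p) k.-1).
    case: (ltngtP i k.-1) => ik'.
    - by exists k.-1; rewrite // ik' (leq_trans (leq_pred k) kj).
    - by rewrite -(prednK k0) ltnS leqNgt ik' in ik.
    - by exists j; rewrite ?ij ?leqnn // -ik' eqij.
  have kp : k.-1 < size p by rewrite -ltnS prednK // (leq_ltn_trans kj js).
  by have := pathP u up _ kp; rewrite -[in nth _ (_ :: p) k](prednK k0).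
by exists j; rewrite ?ij ?leqnn.
Qed.

End RootedTree.

Lemma is_rtree_rooted n (E : {set 'I_n * 'I_n}) :
  is_rtree E -> exists r, rooted E r.
Proof.
case/existsP => r /forallP rE; exists r; split.
- by have /and3P[/eqP + _ _] := rE r; rewrite eqxx => /eqP.
- by move=> v vr; have /and3P[_ /implyP/(_ vr)/eqP -> _] := rE v.
- by move=> v; have /and3P[_ _ ->] := rE v.
Qed.

Lemma rooted_root n (E : {set 'I_n * 'I_n}) r :
  rooted E r -> Defs.root E = Some r.
Proof.
case=> r0 r1 _; rewrite /Defs.root.
case: pickP => [r' r'0|/(_ r)/negbT/negP[]].
  by congr Some; apply: contraTeq r'0 => /r1 ->.
by rewrite r0.
Qed.

Definition edge_between n (E : {set 'I_n * 'I_n}) a b :=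
  ((a, b) \in E) || ((b, a) \in E).

(* An E1-edge (w, v) missing from E2 is reversed in E2; the E1-edge (c, w) is
   then missing from E2 too, since otherwise c = v and E1 would contain both
   (v, w) and (w, v).  So the heads of the missing edges are parent-closed. *)
Lemma rooted_subset n (E1 E2 : {set 'I_n * 'I_n}) r :
  rooted E1 r -> rooted E2 r ->
  (forall a b, a != b -> edge_between E1 a b = edge_between E2 a b) ->
  {subset E1 <= E2}.
Proof.
move=> h1 h2 adj [a b] ab; apply/negPn/negP => nab.
pose C v := exists2 u, (u, v) \in E1 & (u, v) \notin E2.
apply: (@rooted_parent_closed_empty _ _ _ h1 C _ b); last by exists a.
have adj12 u v : (u, v) \in E1 -> edge_between E2 u v.
  move=> uv; rewrite -adj /edge_between ?uv //.
  by apply: contraTneq uv => ->; exact: rooted_irrefl h1 _.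
move=> v [w wv wvN]; exists w => //.
have vw : (v, w) \in E2.
  by move: (adj12 _ _ wv); rewrite /edge_between (negbTE wvN).
have wr : w != r by apply: contraTneq vw => ->; exact: rooted_root_parentless.
have [c cw] := rooted_parent_exists h1 wr.
exists c => //; apply: contraTN wv => /(rooted_parent_uniq h2 vw) cv.
by rewrite -cv in cw; exact: (rooted_asym h1 cw).
Qed.

Lemma rooted_eq n (E1 E2 : {set 'I_n * 'I_n}) r :
  rooted E1 r -> rooted E2 r ->
  (forall a b, a != b -> edge_between E1 a b = edge_between E2 a b) -> E1 = E2.
Proof.
move=> h1 h2 adj; apply/setP => e; apply/idP/idP.
  exact: rooted_subset h1 h2 adj e.
by apply: rooted_subset h2 h1 _ e => a b /adj ->.
Qed.

Local Open Scope ring_scope.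

Section ExpField.
Variables (R : realType) (d : nat) (b : 'I_d -> R).

Definition lin_form (y : 'rV[R]_d) : R := \sum_i b i * y ord0 i.

Lemma lin_form_is_linear : linear lin_form.
Proof.
move=> a y z; rewrite /lin_form /GRing.scale /= mulr_sumr -big_split /=.
by apply: eq_bigr => i _; rewrite !mxE mulrDr mulrCA.
Qed.

HB.instance Definition _ :=
  GRing.isLinear.Build R _ _ _ lin_form lin_form_is_linear.

Lemma differentiable_lin_form x : differentiable lin_form x.
Proof.
have -> : lin_form = \sum_(i < d) (fun y : 'rV[R]_d => b i * y ord0 i).
  by apply/funext => y; rewrite fct_sumE.
apply: differentiable_sum => i.
exact/differentiableM/differentiable_coord/differentiable_cst.
Qed.

Lemma lin_form_delta j : lin_form (delta_mx 0 j) = b j.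
Proof.
rewrite /lin_form (bigD1 j) //= mxE !eqxx mulr1 big1 ?addr0 // => i ij.
by rewrite mxE (negbTE ij) andbF mulr0.
Qed.

Definition expfield (e : 'rV[R]_d) : vfield R d :=
  fun y => expR (lin_form y) *: e.

Lemma differentiable_expR_lin_form x : differentiable (expR \o lin_form) x.
Proof.
apply: differentiable_comp; first exact: differentiable_lin_form.
exact/derivable1_diffP/derivable_expR.
Qed.

Lemma differentiable_expfield e x : differentiable (expfield e) x.
Proof. exact/differentiableZl/differentiable_expR_lin_form. Qed.

Lemma derive_expfield e x v :
  'D_v (expfield e) x = expfield (lin_form v *: e) x.
Proof.
have dexpR : differentiable expR (lin_form x).
  exact/derivable1_diffP/derivable_expR.
rewrite deriveE ?(diffZl _ (differentiable_expR_lin_form x)); last first.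
  exact: differentiable_expfield.
rewrite diff_comp ?diff_lin ?diff1E ?derive1E ?derive_val /expfield //=.
- by rewrite scalerA -[_ *: expR _]/(_ * _) mulrC.
- by move=> y; exact/differentiable_continuous/differentiable_lin_form.
- exact: differentiable_lin_form.
Qed.

Lemma partial_expfield j e : partial j (expfield e) = expfield (b j *: e).
Proof.
by apply/funext => x; rewrite /partial derive_expfield lin_form_delta.
Qed.

Lemma iter_partial_expfield js e :
  iter_partial js (expfield e) = expfield ((\prod_(j <- js) b j) *: e).
Proof.
elim: js e => [|j js IH] e /=; first by rewrite big_nil scale1r.
by rewrite IH partial_expfield big_cons scalerA.
Qed.

Lemma smooth_expfield e : smooth (expfield e).
Proof.
move=> js; rewrite iter_partial_expfield; split => [x|j x].
  exact/differentiable_continuous/differentiable_expfield.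
exact/diff_derivable/differentiable_expfield.
Qed.

Lemma expfield0 e : expfield e 0 = e.
Proof. by rewrite /expfield raddf0 expR0 scale1r. Qed.

End ExpField.

Lemma prod_natr_all (R : pzSemiRingType) (T : Type) (P : pred T) (s : seq T) :
  \prod_(w <- s) (P w)%:R = (all P s)%:R :> R.
Proof.
elim: s => [|w s IH]; first by rewrite big_nil.
by rewrite big_cons IH -natrM mulnb.
Qed.

Definition marked (c : 'I_2) : bool := c == 1 :> nat.

Section TestFields.
Variables (R : realType) (d : nat) (hd : (1 < d)%N).

Definition colour_basis (c : 'I_2) : 'rV[R]_d := delta_mx 0 (widen_ord hd c).

Definition test_weight (c : 'I_2) (j : 'I_d) : R :=
  (~~ (marked c && (j == 1 :> nat)))%:R.

Definition test_field (c : 'I_2) : Cd R d :=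
  exist _ (expfield (test_weight c) (colour_basis c)) (smooth_expfield _ _).

Lemma iter_partial_test_field0 js c :
  iter_partial js (sval (test_field c)) 0 =
  (\prod_(j <- js) test_weight c j) *: colour_basis c.
Proof. by rewrite iter_partial_expfield expfield0. Qed.

Lemma colour_basis_inj : injective colour_basis.
Proof.
move=> c c' /matrixP/(_ 0 (widen_ord hd c))/eqP.
rewrite !mxE !eqxx -val_eqE /=.
by case: (eqVneq (c : nat) c') => [/val_inj //|_]; rewrite oner_eq0.
Qed.

Lemma scale_colour_basis_inj c (b1 b2 : bool) :
  b1%:R *: colour_basis c = b2%:R *: colour_basis c -> b1 = b2.
Proof.
move/matrixP/(_ 0 (widen_ord hd c))/eqP; rewrite !mxE !eqxx !mulr1.
by case: b1; case: b2; rewrite //= ?oner_eq0 // eq_sym oner_eq0.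
Qed.

Variables (n : nat) (E : {set 'I_n * 'I_n}) (col : 'I_n -> 'I_2).

Fixpoint free_below (k : nat) (u : 'I_n) : bool :=
  if k is k'.+1 then
    all (fun w => free_below k' w && ~~ (marked (col u) && marked (col w)))
        (children E u)
  else false.

Lemma elemF_test_field0 k u :
  elemF E (fun i => sval (test_field (col i))) k u 0 =
  (free_below k u)%:R *: colour_basis (col u).
Proof.
elim: k u => [|k IH] u /=; first by rewrite scale0r.
set cs := children E u.
pose a (m : 'I_(size cs)) (j : 'I_d) := (free_below k (nth u cs m))%:R *
  colour_basis (col (nth u cs m)) 0 j * test_weight (col u) j.
rewrite (eq_bigr (fun J : {ffun 'I_(size cs) -> 'I_d} =>
  (\prod_m a m (J m)) *: colour_basis (col u))); last first.
  move=> J _; rewrite iter_partial_test_field0 scalerA; congr (_ *: _).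
  rewrite big_map big_enum /= -big_split /=; apply: eq_bigr => m _.
  by rewrite IH mxE.
rewrite -scaler_suml -bigA_distr_bigA; congr (_ *: _).
rewrite -prod_natr_all [RHS](big_nth u) big_mkord; apply: eq_bigr => m _.
(* only the colour of the m-th child survives in the sum over j *)
rewrite /a (bigD1 (widen_ord hd (col (nth u cs m)))) //= big1 ?addr0;
  last first.
  by move=> j /negbTE jn; rewrite mxE jn andbF mulr0 mul0r.
by rewrite mxE !eqxx mulr1 -natrM mulnb.
Qed.
End TestFields.

Section MarkedEdge.
Variables (n : nat) (E : {set 'I_n * 'I_n}) (col : 'I_n -> 'I_2).

Definition marked_edge : bool :=
  [exists a, exists b, [&& (a, b) \in E, marked (col a) & marked (col b)]].

Lemma free_below_path k u p b : path (edge E) u p -> (last u p, b) \in E ->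
  marked (col (last u p)) -> marked (col b) -> ~~ free_below E col k u.
Proof.
elim: k u p => [|k IH] u p //= up lb ml mb; apply/allP => free.
have child w : (u, w) \in E -> w \in children E u.
  by rewrite /children mem_filter mem_enum andbT.
case: p up lb ml => [|w p] /= => [_ ub mu|/andP[uw wp] lb ml].
  by have /andP[_] := free b (child b ub); rewrite mu mb.
by have /andP[+ _] := free w (child w uw); apply/negP/(IH w p).
Qed.

Lemma free_below_unmarked k u : ~~ marked_edge ->
  (forall p, path (edge E) u p -> (size p < k)%N) -> free_below E col k u.
Proof.
move=> nomark; elim: k u => [|k IH] u hp /=; first by have := hp [::] isT.
apply/allP => w; rewrite /children mem_filter mem_enum andbT => uw.
rewrite IH => [|p wp]; last by apply: (hp (w :: p)); rewrite /= wp andbT.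
apply: contra nomark => /andP[mu mw].
by apply/existsP; exists u; apply/existsP; exists w; rewrite uw mu mw.
Qed.

Lemma free_below_root r : rooted E r -> free_below E col n r = ~~ marked_edge.
Proof.
move=> hr; apply/idP/idP => [free|nomark].
  apply/negP => /existsP[a /existsP[b /and3P[ab ma mb]]].
  case: hr => _ _ /(_ a)/connectP[p rp al]; subst a.
  by have := free_below_path n rp ab ma mb; rewrite free.
by apply: free_below_unmarked nomark _ => p; exact: (rooted_path_size hr).
Qed.

End MarkedEdge.

Lemma Fk_test_field0 (R : realType) d (hd : (1 < d)%N) n (t : RT n) r :
  rooted (val t) r -> forall col,
  Fk t col (test_field R hd) 0 =
  (~~ marked_edge (val t) col)%:R *: colour_basis R hd (col r).
Proof.
move=> hr col; rewrite /Fk /F (rooted_root hr).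
by rewrite elemF_test_field0 (free_below_root _ hr).
Qed.

Definition colouring n (S : pred 'I_n) (i : 'I_n) : 'I_2 :=
  if S i then ord_max else ord0.

Lemma marked_colouring n (S : pred 'I_n) i : marked (colouring S i) = S i.
Proof. by rewrite /colouring; case: (S i). Qed.

Section Colourings.
Variables (n : nat) (E : {set 'I_n * 'I_n}) (r : 'I_n).
Hypothesis hr : rooted E r.

Lemma marked_edge_single v : marked_edge E (colouring (pred1 v)) = false.
Proof.
apply/negbTE/existsP => -[a /existsP[b]]; rewrite !marked_colouring /=.
case/and3P=> ab /eqP ea /eqP eb; move: ab; rewrite ea eb.
exact/negP/(rooted_irrefl hr).
Qed.

Lemma marked_edge_pair a b : a != b ->
  marked_edge E (colouring [pred i | (i == a) || (i == b)]) =
  edge_between E a b.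
Proof.
move=> ab; apply/existsP/orP => [[x /existsP[y]]|[ab'|ba']].
  rewrite !marked_colouring /= => /and3P[xy].
  case/orP=> /eqP ex /orP[]/eqP ey; subst x y.
  - by rewrite (negbTE (rooted_irrefl hr a)) in xy.
  - by left.
  - by right.
  - by rewrite (negbTE (rooted_irrefl hr b)) in xy.
- exists a; apply/existsP; exists b.
  by rewrite ab' !marked_colouring /= !eqxx orbT.
- exists b; apply/existsP; exists a.
  by rewrite ba' !marked_colouring /= !eqxx orbT.
Qed.

End Colourings.

Lemma Fk_test_field0_inj (R : realType) d (hd : (1 < d)%N) n (t1 t2 : RT n) :
  (forall x, Fk t1 x (test_field R hd) 0 = Fk t2 x (test_field R hd) 0) ->
  t1 = t2.
Proof.
move=> eqF; have [r1 h1] := is_rtree_rooted (valP t1).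
have [r2 h2] := is_rtree_rooted (valP t2).
have r21 : r2 = r1.
  move: (eqF (colouring (pred1 r1))).
  rewrite !(Fk_test_field0 R hd h1, Fk_test_field0 R hd h2).
  rewrite (marked_edge_single h1) (marked_edge_single h2) /= !scale1r.
  move/colour_basis_inj/(congr1 marked).
  by rewrite !marked_colouring /= eqxx => /esym/eqP.
subst r2; apply/val_inj/(rooted_eq h1 h2) => a b ab.
move: (eqF (colouring [pred i | (i == a) || (i == b)])).
rewrite !(Fk_test_field0 R hd h1, Fk_test_field0 R hd h2).
rewrite (marked_edge_pair h1 ab) (marked_edge_pair h2 ab).
by move/scale_colour_basis_inj/negb_inj.
Qed.

Theorem theorem6p1 (R : realType) (d : nat) (hd : (2 <= d)%N)
    (CD : nat -> Type) (act : forall n, {perm 'I_n} -> CD n -> CD n)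
    (H : forall n, CD n -> ('I_n -> 'I_2) -> Map R d)
    (p : forall n, RT n -> CD n) :
  weak_comb_descr act H -> compatible_RT act H p ->
  forall n, bijective (p n).
Proof.
move=> _ [_ p_surj p_compat] n; rewrite -setTT_bijective.
split=> [//|t1 t2 _ _ eqp|c _]; last by have [t <-] := p_surj n c; exists t.
by apply: (@Fk_test_field0_inj R d hd) => x; rewrite !p_compat eqp.
Qed.
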